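(* Let $n\ge 1$ and let $[v_0,\dots,v_n]$ and $[v'_0,\dots,v'_n]$ be (non-degenerate) $n$-simplices in $\mathbb{R}^n$. The following are equivalent: (i) there are real numbers $u_0,\dots,u_n$ such that $|v'_i-v'_j| = e^{\frac12(u_i+u_j)}|v_i-v_j|$ for all two-element subsets $\{i,j\}\subseteq\{0,\dots,n\}$; (ii) there is a Möbius transformation $T$ of $\widehat{\mathbb{R}^n}$ such that $v'_i=T(v_i)$ for all $i\in\{0,\dots,n\}$.
   Context: $\widehat{\mathbb{R}^n}=\mathbb{R}^n\cup\{\infty\}$ is the one-point compactification of $\mathbb{R}^n$. A Möbius transformation of $\widehat{\mathbb{R}^n}$ is a composition of inversions in (Euclidean) hyperspheres and reflections in hyperplanes. $|\cdot|$ denotes the Euclidean norm. *)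

From Stdlib Require Import Reals Lra.
From Stdlib Require Fin.
Open Scope R_scope.

Definition point (n : nat) : Type := Fin.t n -> R.

Fixpoint fsum (n : nat) : (Fin.t n -> R) -> R :=
  match n return (Fin.t n -> R) -> R with
  | O => fun _ => 0
  | S m => fun f => f Fin.F1 + fsum m (fun k => f (Fin.FS k))
  end.

Definition dot {n : nat} (x y : point n) : R := fsum n (fun k => x k * y k).
Definition normsq {n : nat} (x : point n) : R := dot x x.
Definition pnorm {n : nat} (x : point n) : R := sqrt (normsq x).
Definition psub {n : nat} (x y : point n) : point n := fun k => x k - y k.
Definition edist {n : nat} (x y : point n) : R := pnorm (psub x y).

(* One-point compactification: None = infinity. *)
Definition ext (n : nat) : Type := option (point n).

Definition reflection {n : nat} (a : point n) (t : R) (p : ext n) : ext n :=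
  match p with
  | None => None
  | Some x => Some (fun k => x k - 2 * (dot a x - t) / normsq a * a k)
  end.

Definition inversion {n : nat} (c : point n) (r : R) (p : ext n) : ext n :=
  match p with
  | None => Some c
  | Some x =>
      if Req_EM_T (normsq (psub x c)) 0 then None
      else Some (fun k => c k + r ^ 2 * (x k - c k) / normsq (psub x c))
  end.

Inductive is_mobius (n : nat) : (ext n -> ext n) -> Prop :=
  | mob_refl : forall (a : point n) (t : R), a <> (fun _ => 0) ->
      is_mobius n (reflection a t)
  | mob_inv : forall (c : point n) (r : R), 0 < r ->
      is_mobius n (inversion c r)
  | mob_comp : forall f g, is_mobius n f -> is_mobius n g ->
      is_mobius n (fun p => f (g p)).

(* [v 0, ..., v n] is a non-degenerate n-simplex: the vertices are affinely
   independent. *)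
Definition nondeg_simplex (n : nat) (v : nat -> point n) : Prop :=
  forall lam : nat -> R,
    sum_f_R0 lam n = 0 ->
    (forall k : Fin.t n, sum_f_R0 (fun i => lam i * v i k) n = 0) ->
    forall i, (i <= n)%nat -> lam i = 0.

(** (ii) => (i): reflections preserve squared distances and an inversion
    multiplies [|x - y|^2] by [r^4 / (|x - c|^2 |y - c|^2)]; with infinity put
    at squared distance 1 from every point, every generator therefore scales
    squared distances by [c / (h p * h q)] for a positive weight [h], so
    Möbius maps preserve cross-ratios of squared distances.  The ratios
    [s_ij = |v'_i - v'_j|^2 / |v_i - v_j|^2] then satisfy
    [s_ik s_jl = s_ij s_kl] on distinct quadruples, which forces
    [s_ij = e^(u_i + u_j)] with [e^(2 u_i) = s_ij s_ik / s_jk].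

    (i) => (ii): inverting [v] at [v_0] with radius [e^(-u_0/2)] and [v'] at
    [v'_0] with radius 1 sends the remaining vertices to congruent
    configurations, and congruent finite configurations are related by a
    composition of reflections in perpendicular bisectors.

    Non-degeneracy of the simplices is used only through the distinctness of
    their vertices. *)

From Stdlib Require Import Reals.
From Stdlib Require Import Lra Lia FunctionalExtensionality.
Open Scope R_scope.

Lemma fsum_ext n : forall f g : Fin.t n -> R,
  (forall k, f k = g k) -> fsum n f = fsum n g.
Proof.
  induction n as [|n IH]; intros f g Hfg; simpl; [reflexivity|].
  rewrite Hfg, (IH _ (fun k => g (Fin.FS k))); auto.
Qed.

Lemma fsum_linear2 n : forall (f g : Fin.t n -> R) a b,
  fsum n (fun k => a * f k + b * g k) = a * fsum n f + b * fsum n g.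
Proof. induction n as [|n IH]; intros; simpl; [|rewrite IH]; ring. Qed.

Lemma fsum_linear3 n : forall (f g h : Fin.t n -> R) a b c,
  fsum n (fun k => a * f k + b * g k + c * h k)
  = a * fsum n f + b * fsum n g + c * fsum n h.
Proof. induction n as [|n IH]; intros; simpl; [|rewrite IH]; ring. Qed.

Lemma fsum_nonneg n : forall f : Fin.t n -> R,
  (forall k, 0 <= f k) -> 0 <= fsum n f.
Proof.
  induction n as [|n IH]; intros f Hf; simpl; [lra|].
  pose proof (Hf Fin.F1). pose proof (IH (fun k => f (Fin.FS k)) (fun k => Hf _)).
  lra.
Qed.

Lemma fsum_nonneg_eq0 n : forall f : Fin.t n -> R,
  (forall k, 0 <= f k) -> fsum n f = 0 -> forall k, f k = 0.
Proof.
  induction n as [|n IH]; intros f Hf Hsum k; [inversion k|].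
  simpl in Hsum. pose proof (Hf Fin.F1).
  pose proof (fsum_nonneg n (fun k => f (Fin.FS k)) (fun k => Hf _)).
  apply (Fin.caseS' k (fun k => f k = 0)); [lra|].
  intros p. apply (IH (fun k => f (Fin.FS k))); [intros; apply Hf | lra].
Qed.

Lemma normsq_nonneg {n} (x : point n) : 0 <= normsq x.
Proof. apply fsum_nonneg. intros; nra. Qed.

Lemma normsq_eq0 {n} (x : point n) : normsq x = 0 -> x = (fun _ => 0).
Proof.
  intros Hx. apply functional_extensionality. intros k.
  pose proof (fsum_nonneg_eq0 n (fun k => x k * x k) (fun k => ltac:(nra)) Hx k).
  simpl in *. nra.
Qed.

Lemma normsq_psub_eq0 {n} (x y : point n) : normsq (psub x y) = 0 -> x = y.
Proof.
  intros Hxy. apply normsq_eq0 in Hxy. apply functional_extensionality. intros k.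
  apply (f_equal (fun f => f k)) in Hxy. unfold psub in Hxy. lra.
Qed.

Lemma normsq_psub_pos {n} (x y : point n) : x <> y -> 0 < normsq (psub x y).
Proof.
  intros Hxy. destruct (normsq_nonneg (psub x y)) as [Hpos|Hzero]; [exact Hpos|].
  symmetry in Hzero. apply normsq_psub_eq0 in Hzero. contradiction.
Qed.

Lemma normsq_psub_neq0 {n} (x y : point n) : x <> y -> normsq (psub x y) <> 0.
Proof. intros Hxy. apply Rgt_not_eq, normsq_psub_pos, Hxy. Qed.

Lemma dot_comm {n} (x y : point n) : dot x y = dot y x.
Proof. apply fsum_ext. intros; ring. Qed.

Lemma dot_psub_r {n} (a x y : point n) : dot a (psub x y) = dot a x - dot a y.
Proof.
  unfold dot, psub.
  rewrite (fsum_ext n _ (fun k => 1 * (a k * x k) + (-1) * (a k * y k))).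
  - rewrite fsum_linear2. ring.
  - intros; ring.
Qed.

Lemma normsq_psub {n} (x y : point n) :
  normsq (psub x y) = normsq x - 2 * dot x y + normsq y.
Proof.
  unfold normsq, dot, psub.
  rewrite (fsum_ext n _ (fun k => 1 * (x k * x k) + (-2) * (x k * y k) + 1 * (y k * y k))).
  - rewrite fsum_linear3. ring.
  - intros; ring.
Qed.

Lemma normsq_psub_self {n} (x : point n) : normsq (psub x x) = 0.
Proof. rewrite normsq_psub. unfold normsq. ring. Qed.

Lemma normsq_psub_sym {n} (x y : point n) : normsq (psub x y) = normsq (psub y x).
Proof. rewrite !normsq_psub, dot_comm. ring. Qed.

Definition reflect_pt {n} (a : point n) (t : R) (x : point n) : point n :=
  fun k => x k - 2 * (dot a x - t) / normsq a * a k.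

Lemma reflection_Some {n} (a : point n) t x :
  reflection a t (Some x) = Some (reflect_pt a t x).
Proof. reflexivity. Qed.

Lemma reflect_pt_isometry {n} (a : point n) t x y : a <> (fun _ => 0) ->
  normsq (psub (reflect_pt a t x) (reflect_pt a t y)) = normsq (psub x y).
Proof.
  intros Ha. assert (Na : normsq a <> 0) by (intro E; apply Ha, normsq_eq0, E).
  set (s := 2 * (dot a x - t) / normsq a). set (s' := 2 * (dot a y - t) / normsq a).
  set (d := psub x y).
  transitivity (fsum n (fun k => 1 * (d k * d k) + (-2 * (s - s')) * (d k * a k)
                                 + (s - s') ^ 2 * (a k * a k))).
  { apply fsum_ext. intros k. unfold d, psub, reflect_pt. fold s s'. ring. }
  rewrite fsum_linear3. fold (dot d d) (dot d a) (dot a a) (normsq d) (normsq a).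
  rewrite (dot_comm d a). unfold d. rewrite dot_psub_r. unfold s, s'. field. exact Na.
Qed.

Lemma reflect_pt_fixed {n} (a : point n) t x : dot a x = t -> reflect_pt a t x = x.
Proof.
  intros Hx. apply functional_extensionality. intros k.
  unfold reflect_pt. rewrite Hx. unfold Rdiv. ring.
Qed.

Lemma equidistant_dot {n} (x z w : point n) :
  normsq (psub x z) = normsq (psub x w) -> dot (psub w z) x = (normsq w - normsq z) / 2.
Proof. intros H. rewrite !normsq_psub in H. rewrite dot_comm, dot_psub_r. lra. Qed.

Lemma reflect_pt_bisector {n} (z w : point n) : z <> w ->
  reflect_pt (psub w z) ((normsq w - normsq z) / 2) z = w.
Proof.
  intros Hzw. set (a := psub w z).
  assert (Na : normsq a <> 0) by (apply normsq_psub_neq0; auto).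
  assert (E1 : dot a z = dot z w - normsq z)
    by (unfold a; rewrite dot_comm, dot_psub_r; reflexivity).
  assert (E2 : normsq a = normsq w - 2 * dot z w + normsq z)
    by (unfold a; rewrite normsq_psub, dot_comm; reflexivity).
  apply functional_extensionality. intros k. unfold reflect_pt. rewrite E1.
  replace (2 * (dot z w - normsq z - (normsq w - normsq z) / 2) / normsq a) with (-1).
  - unfold a, psub. ring.
  - rewrite E2 in *. field. exact Na.
Qed.

Definition invert_pt {n} (c : point n) (r : R) (x : point n) : point n :=
  fun k => c k + r ^ 2 * (x k - c k) / normsq (psub x c).

Lemma invert_pt_dist_centre {n} (c : point n) r x : x <> c ->
  normsq (psub (invert_pt c r x) c) = r ^ 4 / normsq (psub x c).
Proof.
  intros Hx. pose proof (normsq_psub_neq0 x c Hx) as Nx.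
  set (N := normsq (psub x c)) in *. set (X := psub x c).
  transitivity (fsum n (fun k => (r ^ 2 / N) ^ 2 * (X k * X k) + 0 * X k + 0 * X k)).
  { apply fsum_ext. intros k. unfold invert_pt. fold N. unfold X, psub. field. exact Nx. }
  rewrite fsum_linear3. fold (dot X X) (normsq X). unfold X. fold N. field. exact Nx.
Qed.

Lemma invert_pt_dist {n} (c : point n) r x y : x <> c -> y <> c ->
  normsq (psub (invert_pt c r x) (invert_pt c r y))
  = r ^ 4 * normsq (psub x y) / (normsq (psub x c) * normsq (psub y c)).
Proof.
  intros Hx Hy.
  pose proof (normsq_psub_neq0 x c Hx) as Nx. pose proof (normsq_psub_neq0 y c Hy) as Ny.
  set (Al := normsq (psub x c)) in *. set (Be := normsq (psub y c)) in *.
  set (X := psub x c). set (Y := psub y c).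
  assert (E : normsq (psub x y) = normsq (psub X Y))
    by (apply fsum_ext; intros k; unfold X, Y, psub; ring).
  rewrite E, (normsq_psub X Y).
  transitivity (fsum n (fun k => (r ^ 2 / Al) ^ 2 * (X k * X k)
                   + (-2 * (r ^ 2 / Al) * (r ^ 2 / Be)) * (X k * Y k)
                   + (r ^ 2 / Be) ^ 2 * (Y k * Y k))).
  { apply fsum_ext. intros k. unfold invert_pt. fold Al Be. unfold X, Y, psub.
    field. split; assumption. }
  rewrite fsum_linear3. fold (dot X X) (dot X Y) (dot Y Y) (normsq X) (normsq Y).
  unfold X, Y. fold Al Be. field. split; assumption.
Qed.

Lemma invert_pt_neq_centre {n} (c : point n) r x : r <> 0 -> x <> c -> invert_pt c r x <> c.
Proof.
  intros Hr Hx E. pose proof (normsq_psub_neq0 x c Hx) as Nx.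
  pose proof (invert_pt_dist_centre c r x Hx) as D. rewrite E, normsq_psub_self in D.
  symmetry in D. apply Rmult_integral in D as [D|D].
  - apply pow_nonzero in D; auto.
  - apply Rinv_neq_0_compat in Nx. contradiction.
Qed.

Lemma invert_pt_involutive {n} (c : point n) r x : r <> 0 -> x <> c ->
  invert_pt c r (invert_pt c r x) = x.
Proof.
  intros Hr Hx. pose proof (normsq_psub_neq0 x c Hx).
  apply functional_extensionality. intros k. unfold invert_pt at 1.
  rewrite invert_pt_dist_centre by exact Hx. unfold invert_pt, psub. field. split; auto.
Qed.

Lemma inversion_Some {n} (c : point n) r x : x <> c ->
  inversion c r (Some x) = Some (invert_pt c r x).
Proof.
  intros Hx. simpl. destruct (Req_EM_T _ 0) as [E|_]; [|reflexivity].
  exfalso. exact (normsq_psub_neq0 x c Hx E).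
Qed.

Lemma inversion_centre {n} (c : point n) r : inversion c r (Some c) = None.
Proof.
  simpl. destruct (Req_EM_T _ 0) as [_|E]; [reflexivity|].
  exfalso. exact (E (normsq_psub_self c)).
Qed.

Lemma inversion_involutive {n} (c : point n) r p : r <> 0 ->
  inversion c r (inversion c r p) = p.
Proof.
  intros Hr. destruct p as [x|]; [|apply inversion_centre].
  destruct (Req_EM_T (normsq (psub x c)) 0) as [E|Nx].
  - apply normsq_psub_eq0 in E. subst x. rewrite inversion_centre. reflexivity.
  - assert (Hx : x <> c) by (intro; subst; apply Nx, normsq_psub_self).
    rewrite !inversion_Some by auto using invert_pt_neq_centre.
    rewrite invert_pt_involutive by auto. reflexivity.
Qed.

Lemma is_mobius_id n : is_mobius n (fun p => p).
Proof.
  set (o := (fun _ => 0) : point n).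
  replace (fun p : ext n => p) with (fun p => inversion o 1 (inversion o 1 p)).
  - apply mob_comp; apply mob_inv; lra.
  - apply functional_extensionality. intros p. apply inversion_involutive. lra.
Qed.

(* Squared distance on the compactification; infinity is put at squared
   distance 1 from every point, the normalisation under which inversions
   satisfy [conformal_distortion] below. *)
Definition sqdist {n} (p q : ext n) : R :=
  match p, q with
  | Some x, Some y => normsq (psub x y)
  | None, None => 0
  | _, _ => 1
  end.

Lemma sqdist_pos {n} (p q : ext n) : p <> q -> 0 < sqdist p q.
Proof.
  destruct p as [x|], q as [y|]; simpl; intros Hpq; try lra.
  - apply normsq_psub_pos. intros ->. auto.
  - contradiction.
Qed.

Lemma sqdist_eq0 {n} (p q : ext n) : sqdist p q = 0 -> p = q.
Proof.
  destruct p as [x|], q as [y|]; simpl; intros H; try lra; [|reflexivity].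
  f_equal. apply normsq_psub_eq0, H.
Qed.

Lemma sqdist_self {n} (p : ext n) : sqdist p p = 0.
Proof. destruct p; simpl; [apply normsq_psub_self | reflexivity]. Qed.

Lemma sqdist_sym {n} (p q : ext n) : sqdist p q = sqdist q p.
Proof. destruct p, q; simpl; auto using normsq_psub_sym. Qed.

Definition conformal_distortion {n} (f : ext n -> ext n) : Prop :=
  exists (c : R) (h : ext n -> R), 0 < c /\ (forall p, 0 < h p) /\
    forall p q, p <> q -> sqdist (f p) (f q) = c * sqdist p q / (h p * h q).

(* Invariance of the cross-ratio [|pq| |rs| / (|pr| |qs|)] of squared
   distances, cleared of denominators. *)
Definition cross_ratio_preserving {n} (f : ext n -> ext n) : Prop :=
  (forall p q, p <> q -> f p <> f q) /\
  forall p q r s, p <> q -> r <> s -> p <> r -> q <> s ->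
    sqdist p q * sqdist r s * (sqdist (f p) (f r) * sqdist (f q) (f s))
    = sqdist p r * sqdist q s * (sqdist (f p) (f q) * sqdist (f r) (f s)).

Lemma reflection_distortion {n} (a : point n) t : a <> (fun _ => 0) ->
  conformal_distortion (reflection a t).
Proof.
  intros Ha. exists 1, (fun _ => 1). split; [lra|]. split; [intros; lra|].
  intros [x|] [y|] Hxy; [| | |contradiction]; [|simpl; field|simpl; field].
  rewrite !reflection_Some. simpl sqdist. rewrite reflect_pt_isometry by exact Ha. field.
Qed.

(* The weight at the centre is what the limiting formula requires for the
   pairs sent to and from infinity. *)
Definition inversion_weight {n} (c : point n) (r : R) (p : ext n) : R :=
  match p with
  | None => 1
  | Some x => if Req_EM_T (normsq (psub x c)) 0 then r ^ 4 else normsq (psub x c)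
  end.

Lemma inversion_weight_centre {n} (c : point n) r :
  inversion_weight c r (Some c) = r ^ 4.
Proof.
  simpl. destruct (Req_EM_T _ 0) as [_|E]; [reflexivity|].
  exfalso. exact (E (normsq_psub_self c)).
Qed.

Lemma inversion_weight_Some {n} (c : point n) r x : x <> c ->
  inversion_weight c r (Some x) = normsq (psub x c).
Proof.
  intros Hx. simpl. destruct (Req_EM_T _ 0) as [E|_]; [|reflexivity].
  exfalso. exact (normsq_psub_neq0 x c Hx E).
Qed.

Lemma inversion_weight_pos {n} (c : point n) r p : 0 < r -> 0 < inversion_weight c r p.
Proof.
  intros Hr. destruct p as [x|]; [|simpl; lra].
  destruct (Req_EM_T (normsq (psub x c)) 0) as [E|Nx].
  - apply normsq_psub_eq0 in E. subst. rewrite inversion_weight_centre. apply pow_lt, Hr.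
  - assert (Hx : x <> c) by (intros ->; apply Nx, normsq_psub_self).
    rewrite inversion_weight_Some by exact Hx. apply normsq_psub_pos, Hx.
Qed.

Lemma inversion_distortion {n} (c : point n) r : 0 < r ->
  conformal_distortion (inversion c r).
Proof.
  intros Hr. assert (Hr4 : 0 < r ^ 4) by (apply pow_lt, Hr).
  exists (r ^ 4), (inversion_weight c r).
  split; [exact Hr4|]. split; [intros; apply inversion_weight_pos, Hr|].
  set (F := fun p q => sqdist (inversion c r p) (inversion c r q)
    = r ^ 4 * sqdist p q / (inversion_weight c r p * inversion_weight c r q)).
  assert (Fsym : forall p q, F p q -> F q p).
  { unfold F. intros p q H. rewrite sqdist_sym, H, sqdist_sym. f_equal. ring. }
  assert (Finf : forall x, x <> c -> F (Some x) None).
  { intros x Hx. pose proof (normsq_psub_neq0 x c Hx). unfold F.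
    rewrite inversion_Some, inversion_weight_Some by exact Hx. simpl.
    rewrite invert_pt_dist_centre by exact Hx. field. assumption. }
  assert (Fcentre : forall p, p <> Some c -> F (Some c) p).
  { intros [y|] Hy; unfold F; rewrite inversion_centre, inversion_weight_centre.
    - assert (Hyc : y <> c) by (intros ->; auto). pose proof (normsq_psub_neq0 y c Hyc).
      rewrite inversion_Some, inversion_weight_Some by exact Hyc. simpl.
      rewrite normsq_psub_sym. field. split; lra.
    - simpl. field. lra. }
  assert (Fpts : forall x y, x <> c -> y <> c -> F (Some x) (Some y)).
  { intros x y Hx Hy. unfold F.
    rewrite !inversion_Some, !inversion_weight_Some by assumption. simpl.
    apply invert_pt_dist; assumption. }
  intros p q Hpq. fold (F p q).
  assert (Fany : forall p q, p <> q -> p <> Some c -> q <> Some c -> F p q).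
  { intros [x|] [y|] Hne Hp Hq.
    - apply Fpts; congruence.
    - apply Finf; congruence.
    - apply Fsym, Finf; congruence.
    - contradiction. }
  destruct (Req_EM_T (sqdist p (Some c)) 0) as [Ep|Ep];
    [apply sqdist_eq0 in Ep; subst p; apply Fcentre; congruence|].
  destruct (Req_EM_T (sqdist q (Some c)) 0) as [Eq|Eq];
    [apply sqdist_eq0 in Eq; subst q; apply Fsym, Fcentre; congruence|].
  apply Fany; [exact Hpq | intros -> .. ]; rewrite sqdist_self in *; contradiction.
Qed.

Lemma distortion_cross_ratio {n} (f : ext n -> ext n) :
  conformal_distortion f -> cross_ratio_preserving f.
Proof.
  intros (c & h & Hc & Hh & Hf). split.
  - intros p q Hpq E. pose proof (Hf p q Hpq) as Hd. rewrite E, sqdist_self in Hd.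
    pose proof (sqdist_pos p q Hpq). pose proof (Hh p). pose proof (Hh q).
    assert (0 < c * sqdist p q / (h p * h q))
      by (apply Rdiv_lt_0_compat; apply Rmult_lt_0_compat; assumption).
    lra.
  - intros p q r s Hpq Hrs Hpr Hqs.
    rewrite (Hf p r), (Hf q s), (Hf p q), (Hf r s) by assumption.
    pose proof (Hh p). pose proof (Hh q). pose proof (Hh r). pose proof (Hh s).
    field. repeat split; lra.
Qed.

Lemma cross_ratio_comp {n} (f g : ext n -> ext n) :
  cross_ratio_preserving f -> cross_ratio_preserving g ->
  cross_ratio_preserving (fun p => f (g p)).
Proof.
  intros [If Cf] [Ig Cg]. split; [auto|].
  intros p q r s Hpq Hrs Hpr Hqs.
  pose proof (Cg p q r s Hpq Hrs Hpr Hqs) as Hg.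
  pose proof (Cf (g p) (g q) (g r) (g s) (Ig _ _ Hpq) (Ig _ _ Hrs) (Ig _ _ Hpr) (Ig _ _ Hqs)) as Hf.
  set (X := sqdist (g p) (g r) * sqdist (g q) (g s)) in *.
  set (Y := sqdist (g p) (g q) * sqdist (g r) (g s)) in *.
  assert (HX : 0 < X) by (apply Rmult_lt_0_compat; apply sqdist_pos; auto).
  apply (Rmult_eq_reg_r X); [|lra].
  transitivity (sqdist p q * sqdist r s * X
                * (sqdist (f (g p)) (f (g r)) * sqdist (f (g q)) (f (g s)))); [ring|].
  rewrite Hg.
  transitivity (sqdist p r * sqdist q s
                * (Y * (sqdist (f (g p)) (f (g r)) * sqdist (f (g q)) (f (g s))))); [ring|].
  rewrite Hf. ring.
Qed.

Lemma mobius_cross_ratio n (f : ext n -> ext n) :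
  is_mobius n f -> cross_ratio_preserving f.
Proof.
  induction 1.
  - apply distortion_cross_ratio, reflection_distortion; assumption.
  - apply distortion_cross_ratio, inversion_distortion; assumption.
  - apply cross_ratio_comp; assumption.
Qed.

Lemma congruence_by_reflections n (w w' : nat -> point n) m :
  (forall i j, (i < j < m)%nat -> normsq (psub (w i) (w j)) = normsq (psub (w' i) (w' j))) ->
  exists g : point n -> point n, is_mobius n (option_map g) /\
    (forall x y, normsq (psub (g x) (g y)) = normsq (psub x y)) /\
    forall i, (i < m)%nat -> g (w i) = w' i.
Proof.
  induction m as [|m IH]; intros Hw.
  - exists (fun x => x). split; [|split; [reflexivity | intros; lia]].
    replace (option_map (fun x : point n => x)) with (fun p : ext n => p);
      [apply is_mobius_id|].
    apply functional_extensionality. intros [x|]; reflexivity.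
  - destruct IH as (g & Hmob & Hiso & Hg); [intros; apply Hw; lia|].
    set (z := g (w m)).
    destruct (Req_EM_T (normsq (psub (w' m) z)) 0) as [E|Nz].
    { apply normsq_psub_eq0 in E. exists g. split; [exact Hmob|]. split; [exact Hiso|].
      intros i Hi. destruct (Nat.eq_dec i m) as [->|]; [auto|]. apply Hg. lia. }
    set (a := psub (w' m) z). set (t := (normsq (w' m) - normsq z) / 2).
    assert (Ha : a <> (fun _ => 0)).
    { intros E. apply Nz. replace (w' m) with z; [apply normsq_psub_self|].
      apply functional_extensionality. intros k. apply (f_equal (fun f => f k)) in E.
      unfold a, psub in E. lra. }
    exists (fun x => reflect_pt a t (g x)). split; [|split].
    + replace (option_map (fun x => reflect_pt a t (g x)))
        with (fun p => reflection a t (option_map g p)).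
      * apply mob_comp; [apply mob_refl, Ha | exact Hmob].
      * apply functional_extensionality. intros [x|]; reflexivity.
    + intros x y. rewrite reflect_pt_isometry by exact Ha. apply Hiso.
    + intros i Hi. destruct (Nat.eq_dec i m) as [->|Him].
      * apply reflect_pt_bisector. intros E. apply Nz. rewrite <- E. apply normsq_psub_self.
      * rewrite Hg by lia. apply reflect_pt_fixed. apply equidistant_dot.
        transitivity (normsq (psub (w i) (w m)));
          [rewrite <- (Hg i) by lia; apply Hiso | apply Hw; lia].
Qed.

Lemma exp_half_ln_sum (a b c : R) : 0 < a -> 0 < b -> 0 < c -> a * b = c * c ->
  exp (ln a / 2 + ln b / 2) = c.
Proof.
  intros Ha Hb Hc Habc. set (e := exp (ln a / 2 + ln b / 2)).
  assert (Hee : e * e = a * b).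
  { unfold e. rewrite <- exp_plus, <- (exp_ln a Ha), <- (exp_ln b Hb), <- exp_plus.
    rewrite !ln_exp. f_equal. field. }
  assert (0 < e) by apply exp_pos. nra.
Qed.

Lemma third_index i j : exists k, (k <= 2)%nat /\ k <> i /\ k <> j.
Proof.
  destruct (Nat.eq_dec i 0), (Nat.eq_dec j 0), (Nat.eq_dec i 1), (Nat.eq_dec j 1);
    first [exists 0%nat; lia | exists 1%nat; lia | exists 2%nat; lia].
Qed.

Section MatchingFactorization.

Variables (n : nat) (s : nat -> nat -> R).

Hypothesis s_pos : forall i j, (i <= n)%nat -> (j <= n)%nat -> i <> j -> 0 < s i j.
Hypothesis s_sym : forall i j, s i j = s j i.
Hypothesis s_matching : forall a b c d,
  (a <= n)%nat -> (b <= n)%nat -> (c <= n)%nat -> (d <= n)%nat ->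
  a <> b -> a <> c -> a <> d -> b <> c -> b <> d -> c <> d ->
  s a c * s b d = s a b * s c d.

(* [e^(2 u_i)] will be [tri i j k], which does not depend on [j] and [k]. *)
Let tri i j k := s i j * s i k / s j k.

Lemma tri_pos i j k : (i <= n)%nat -> (j <= n)%nat -> (k <= n)%nat ->
  i <> j -> i <> k -> j <> k -> 0 < tri i j k.
Proof.
  intros. unfold tri.
  apply Rdiv_lt_0_compat; [apply Rmult_lt_0_compat|]; apply s_pos; assumption.
Qed.

Lemma tri_swap i j k : tri i j k = tri i k j.
Proof. unfold tri, Rdiv. rewrite (s_sym k j). ring. Qed.

Lemma tri_replace i j k l :
  (i <= n)%nat -> (j <= n)%nat -> (k <= n)%nat -> (l <= n)%nat ->
  i <> j -> i <> k -> i <> l -> j <> k -> j <> l -> tri i j k = tri i j l.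
Proof.
  intros Hi Hj Hk Hl Hij Hik Hil Hjk Hjl.
  destruct (Nat.eq_dec k l) as [<-|Hkl]; [reflexivity|].
  pose proof (s_matching i j k l Hi Hj Hk Hl Hij Hik Hil Hjk Hjl Hkl) as Hkl'.
  pose proof (s_matching i j l k Hi Hj Hl Hk Hij Hil Hik Hjl Hjk (not_eq_sym Hkl)) as Hlk.
  rewrite (s_sym l k) in Hlk.
  pose proof (s_pos j k Hj Hk Hjk). pose proof (s_pos j l Hj Hl Hjl).
  unfold tri.
  transitivity (s i j * (s i k * s j l) / (s j k * s j l)); [field; lra|].
  rewrite Hkl', <- Hlk. field. lra.
Qed.

Lemma tri_indep i j k j' k' :
  (i <= n)%nat -> (j <= n)%nat -> (k <= n)%nat -> (j' <= n)%nat -> (k' <= n)%nat ->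
  i <> j -> i <> k -> j <> k -> i <> j' -> i <> k' -> j' <> k' ->
  tri i j k = tri i j' k'.
Proof.
  intros. destruct (Nat.eq_dec k' j) as [->|Hk'j].
  - rewrite (tri_replace i j k j'), tri_swap by (assumption || congruence). reflexivity.
  - rewrite (tri_replace i j k k'), tri_swap, (tri_replace i k' j j'), tri_swap
      by (assumption || congruence).
    reflexivity.
Qed.

Let tri_canonical i :=
  tri i (if Nat.eq_dec i 0 then 1 else 0) (if Nat.eq_dec i 2 then 1 else 2).

Lemma tri_canonical_spec i j k : (2 <= n)%nat ->
  (i <= n)%nat -> (j <= n)%nat -> (k <= n)%nat -> i <> j -> i <> k -> j <> k ->
  0 < tri_canonical i /\ tri_canonical i = tri i j k.
Proof.
  intros. unfold tri_canonical.
  destruct (Nat.eq_dec i 0), (Nat.eq_dec i 2); try lia;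
    (split; [apply tri_pos | apply tri_indep]; lia).
Qed.

Lemma tri_canonical_mul i j : (2 <= n)%nat -> (i <= n)%nat -> (j <= n)%nat -> i <> j ->
  tri_canonical i * tri_canonical j = s i j * s i j.
Proof.
  intros Hn Hi Hj Hij.
  destruct (third_index i j) as (k & Hk & Hki & Hkj).
  rewrite (proj2 (tri_canonical_spec i j k Hn Hi Hj ltac:(lia) Hij ltac:(lia) ltac:(lia))).
  rewrite (proj2 (tri_canonical_spec j i k Hn Hj Hi ltac:(lia) ltac:(lia) ltac:(lia) ltac:(lia))).
  pose proof (s_pos i k Hi ltac:(lia) ltac:(lia)). pose proof (s_pos j k Hj ltac:(lia) ltac:(lia)).
  unfold tri. rewrite (s_sym j i). field. lra.
Qed.

Lemma matching_factorization : (1 <= n)%nat ->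
  exists u : nat -> R, forall i j, (i <= n)%nat -> (j <= n)%nat -> i <> j ->
    exp (u i + u j) = s i j.
Proof.
  intros Hn. destruct (Nat.eq_dec n 1) as [En|Nn].
  - subst n. exists (fun i => if Nat.eq_dec i 0 then ln (s 0 1) else 0).
    intros i j Hi Hj Hij. pose proof (s_pos 0 1 ltac:(lia) ltac:(lia) ltac:(lia)).
    destruct (Nat.eq_dec i 0), (Nat.eq_dec j 0); try lia.
    + subst. replace j with 1%nat by lia. rewrite Rplus_0_r, exp_ln; auto.
    + subst. replace i with 1%nat by lia. rewrite Rplus_0_l, exp_ln, s_sym; auto.
  - exists (fun i => ln (tri_canonical i) / 2). intros i j Hi Hj Hij.
    destruct (third_index i j) as (k & Hk & Hki & Hkj).
    apply exp_half_ln_sum.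
    + apply (tri_canonical_spec i j k); lia.
    + apply (tri_canonical_spec j i k); lia.
    + apply s_pos; assumption.
    + apply tri_canonical_mul; lia.
Qed.

End MatchingFactorization.

Lemma sum_f_R0_indicator (c : R) (i N : nat) :
  sum_f_R0 (fun m => if Nat.eq_dec m i then c else 0) N = if Nat.leb i N then c else 0.
Proof.
  induction N as [|N IH]; cbn [sum_f_R0].
  - destruct (Nat.eq_dec 0 i), (Nat.leb_spec i 0); lia || reflexivity.
  - rewrite IH. destruct (Nat.eq_dec (S N) i), (Nat.leb_spec i N), (Nat.leb_spec i (S N));
      try lia; ring.
Qed.

Lemma nondeg_simplex_injective n (v : nat -> point n) : nondeg_simplex n v ->
  forall i j, (i <= n)%nat -> (j <= n)%nat -> i <> j -> v i <> v j.
Proof.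
  intros Hv i j Hi Hj Hij Heq.
  set (ind := fun (l : nat) (c : R) m => if Nat.eq_dec m l then c else 0).
  assert (Hsum : forall l c, (l <= n)%nat -> sum_f_R0 (ind l c) n = c).
  { intros l c Hl. unfold ind. rewrite sum_f_R0_indicator.
    destruct (Nat.leb_spec l n); [reflexivity | lia]. }
  set (lam := fun m => ind i 1 m - ind j 1 m).
  assert (Hlam : lam i = 0).
  { apply (Hv lam); [|intros k|exact Hi].
    - unfold lam. rewrite minus_sum, !Hsum by assumption. ring.
    - rewrite (sum_eq _ (fun m => ind i (v i k) m - ind j (v j k) m)).
      + rewrite minus_sum, !Hsum, Heq by assumption. ring.
      + intros m _. unfold lam, ind. destruct (Nat.eq_dec m i), (Nat.eq_dec m j); subst; ring. }
  unfold lam, ind in Hlam. destruct (Nat.eq_dec i i), (Nat.eq_dec i j); lia || lra.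
Qed.

Lemma edist_scale_iff {n} (x y x' y' : point n) (t : R) :
  edist x' y' = exp (t / 2) * edist x y <->
  normsq (psub x' y') = exp t * normsq (psub x y).
Proof.
  unfold edist, pnorm.
  assert (Ht : exp t = exp (t / 2) * exp (t / 2)) by (rewrite <- exp_plus; f_equal; field).
  pose proof (exp_pos (t / 2)).
  pose proof (normsq_nonneg (psub x y)). pose proof (normsq_nonneg (psub x' y')).
  split; intros Hxy.
  - rewrite <- (sqrt_sqrt (normsq (psub x' y'))), Hxy, Ht by assumption.
    set (d := sqrt (normsq (psub x y))).
    transitivity (exp (t / 2) * exp (t / 2) * (d * d)); [ring|].
    unfold d. rewrite sqrt_sqrt by assumption. reflexivity.
  - rewrite Hxy, Ht, sqrt_mult, sqrt_square by nra. reflexivity.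
Qed.

Lemma cross_multiplied_ratios (a b c d a' b' c' d' : R) :
  a <> 0 -> b <> 0 -> c <> 0 -> d <> 0 ->
  a * b * (c' * d') = c * d * (a' * b') -> c' / c * (d' / d) = a' / a * (b' / b).
Proof.
  intros Ha Hb Hc Hd H.
  transitivity (a * b * (c' * d') / (a * b * c * d)); [field; auto|].
  rewrite H. field. auto.
Qed.

Section SimplexVertices.

Variables (n : nat) (v v' : nat -> point n).

Hypothesis v_inj : forall i j, (i <= n)%nat -> (j <= n)%nat -> i <> j -> v i <> v j.
Hypothesis v'_inj : forall i j, (i <= n)%nat -> (j <= n)%nat -> i <> j -> v' i <> v' j.

Lemma inverted_vertices_congruent (u : nat -> R) :
  (forall i j, (i <= n)%nat -> (j <= n)%nat -> i <> j ->
     normsq (psub (v' i) (v' j)) = exp (u i + u j) * normsq (psub (v i) (v j))) ->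
  forall i j, (i < j < n)%nat ->
    normsq (psub (invert_pt (v 0) (exp (- u 0%nat / 2)) (v (S i)))
                 (invert_pt (v 0) (exp (- u 0%nat / 2)) (v (S j))))
    = normsq (psub (invert_pt (v' 0) 1 (v' (S i))) (invert_pt (v' 0) 1 (v' (S j)))).
Proof.
  intros Hu i j Hij.
  assert (Hr4 : exp (- u 0%nat / 2) ^ 4 = / (exp (u 0%nat) * exp (u 0%nat))).
  { replace (exp (- u 0%nat / 2) ^ 4)
      with (exp (- u 0%nat / 2 + - u 0%nat / 2) * exp (- u 0%nat / 2 + - u 0%nat / 2))
      by (rewrite exp_plus; ring).
    replace (- u 0%nat / 2 + - u 0%nat / 2) with (- u 0%nat) by field.
    rewrite exp_Ropp. field. apply Rgt_not_eq, exp_pos. }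
  rewrite !invert_pt_dist by (apply v_inj || apply v'_inj; lia).
  rewrite (Hu (S i) (S j)), (Hu (S i) 0%nat), (Hu (S j) 0%nat) by lia.
  rewrite !exp_plus, Hr4.
  pose proof (exp_pos (u 0%nat)). pose proof (exp_pos (u (S i))). pose proof (exp_pos (u (S j))).
  pose proof (normsq_psub_neq0 _ _ (v_inj (S i) 0 ltac:(lia) ltac:(lia) ltac:(lia))).
  pose proof (normsq_psub_neq0 _ _ (v_inj (S j) 0 ltac:(lia) ltac:(lia) ltac:(lia))).
  field. repeat split; lra || assumption.
Qed.

Lemma mobius_of_conformal_scaling (u : nat -> R) :
  (forall i j, (i <= n)%nat -> (j <= n)%nat -> i <> j ->
     normsq (psub (v' i) (v' j)) = exp (u i + u j) * normsq (psub (v i) (v j))) ->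
  exists T, is_mobius n T /\ forall i, (i <= n)%nat -> T (Some (v i)) = Some (v' i).
Proof.
  intros Hu. set (r := exp (- u 0%nat / 2)).
  assert (Hr : 0 < r) by apply exp_pos.
  destruct (congruence_by_reflections n
              (fun i => invert_pt (v 0) r (v (S i))) (fun i => invert_pt (v' 0) 1 (v' (S i))) n
              (inverted_vertices_congruent u Hu)) as (g & Hg & _ & Hgv).
  exists (fun p => inversion (v' 0) 1 (option_map g (inversion (v 0) r p))). split.
  - apply mob_comp; [apply mob_inv; lra|]. apply mob_comp; [exact Hg | apply mob_inv, Hr].
  - intros [|i] Hi.
    + rewrite inversion_centre. reflexivity.
    + rewrite inversion_Some by (apply v_inj; lia). simpl option_map.
      rewrite Hgv, <- inversion_Some by (lia || (apply v'_inj; lia)).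
      apply inversion_involutive. lra.
Qed.

Lemma conformal_scaling_of_mobius (T : ext n -> ext n) : (1 <= n)%nat ->
  is_mobius n T -> (forall i, (i <= n)%nat -> T (Some (v i)) = Some (v' i)) ->
  exists u : nat -> R, forall i j, (i <= n)%nat -> (j <= n)%nat -> i <> j ->
    normsq (psub (v' i) (v' j)) = exp (u i + u j) * normsq (psub (v i) (v j)).
Proof.
  intros Hn HT HTv. destruct (mobius_cross_ratio n T HT) as [_ Hcr].
  set (s := fun a b => normsq (psub (v' a) (v' b)) / normsq (psub (v a) (v b))).
  assert (Hsome : forall a b, (a <= n)%nat -> (b <= n)%nat -> a <> b -> Some (v a) <> Some (v b))
    by (intros a b Ha Hb Hab E; injection E; apply v_inj; assumption).
  assert (Nv : forall a b, (a <= n)%nat -> (b <= n)%nat -> a <> b -> normsq (psub (v a) (v b)) <> 0)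
    by (intros; apply normsq_psub_neq0, v_inj; assumption).
  destruct (matching_factorization n s) as [u Hu].
  - intros i j Hi Hj Hij. apply Rdiv_lt_0_compat; apply normsq_psub_pos; auto.
  - intros i j. unfold s. rewrite (normsq_psub_sym (v' i)), (normsq_psub_sym (v i)). reflexivity.
  - intros a b c d Ha Hb Hc Hd Hab Hac Had Hbc Hbd Hcd.
    specialize (Hcr (Some (v a)) (Some (v b)) (Some (v c)) (Some (v d))
      ltac:(auto) ltac:(auto) ltac:(auto) ltac:(auto)).
    rewrite !HTv in Hcr by assumption. simpl in Hcr. unfold s.
    exact (cross_multiplied_ratios _ _ _ _ _ _ _ _
             (Nv a b Ha Hb Hab) (Nv c d Hc Hd Hcd) (Nv a c Ha Hc Hac) (Nv b d Hb Hd Hbd) Hcr).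
  - exact Hn.
  - exists u. intros i j Hi Hj Hij. rewrite Hu by assumption. unfold s.
    field. apply Nv; assumption.
Qed.

End SimplexVertices.

Theorem lemma3p1 (n : nat) (hn : (1 <= n)%nat) (v v' : nat -> point n)
  (hv : nondeg_simplex n v) (hv' : nondeg_simplex n v') :
  (exists u : nat -> R,
     forall i j : nat, (i <= n)%nat -> (j <= n)%nat -> i <> j ->
       edist (v' i) (v' j) = exp ((u i + u j) / 2) * edist (v i) (v j))
  <->
  (exists T : ext n -> ext n, is_mobius n T /\
     forall i : nat, (i <= n)%nat -> T (Some (v i)) = Some (v' i)).
Proof.
  pose proof (nondeg_simplex_injective n v hv) as v_inj.
  pose proof (nondeg_simplex_injective n v' hv') as v'_inj.
  split.
  - intros [u Hu]. apply (mobius_of_conformal_scaling n v v' v_inj v'_inj u).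
    intros i j Hi Hj Hij. apply edist_scale_iff, Hu; assumption.
  - intros (T & HT & HTv).
    destruct (conformal_scaling_of_mobius n v v' v_inj v'_inj T hn HT HTv) as [u Hu].
    exists u. intros i j Hi Hj Hij. apply edist_scale_iff, Hu; assumption.
Qed.
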